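(* Let $(\Gamma,c)$ be a real Fuchsian group and $\gamma\in\Gamma$ an admissible element. Then the twisted centralizer $Z_\gamma$ is either trivial, cyclic of order two, infinite cyclic, or infinite dihedral (i.e. $\mathbf{Z}/2\mathbf{Z}\ltimes\mathbf{Z}$).
   Context: $\mathfrak{h}$ is the upper half-plane. A complex conjugation is an anti-holomorphic involution $c$ of $\mathfrak{h}$; for $\gamma\in\mathrm{PSL}_2(\mathbf{R})$, $\gamma^c=c\gamma c$. A real Fuchsian group is a pair $(\Gamma,c)$ with $\Gamma\subseteq\mathrm{PSL}_2(\mathbf{R})$ discrete, $c$ a complex conjugation, $\Gamma^c=\Gamma$, and $\mathfrak{h}^*/\Gamma$ compact, where $\mathfrak{h}^*$ is $\mathfrak{h}$ with the cusps of $\Gamma$ adjoined. $\gamma\in\Gamma$ is admissible if $\gamma^c=\gamma^{-1}$. The twisted centralizer of $\gamma$ is $Z_\gamma=\{\sigma\in\Gamma:\sigma^c\gamma\sigma^{-1}=\gamma\}$. *)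

(* R : realType, PSL_2(R) modelled by SL_2(R) matrices up to sign. *)
From HB Require Import structures.
From mathcomp Require Import all_boot all_order all_algebra.
From mathcomp Require Import reals.
Set Implicit Arguments. Unset Strict Implicit. Unset Printing Implicit Defensive.
Import Order.TTheory GRing.Theory Num.Theory.
Local Open Scope ring_scope.

Section Fuchsian.
Variable R : realType.
Notation Mat := 'M[R]_2.

Definition ea (g : Mat) := g ord0 ord0.
Definition eb (g : Mat) := g ord0 ord_max.
Definition ec (g : Mat) := g ord_max ord0.
Definition ed (g : Mat) := g ord_max ord_max.

(* equality in PSL_2(R) / PGL_2(R) of two matrix lifts : equal up to sign *)
Definition pequiv (g h : Mat) : Prop := g = h \/ g = - h.

(* G is the full preimage in SL_2(R) of a subgroup Gamma of PSL_2(R) *)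
Definition psl_subgroup (G : Mat -> Prop) : Prop :=
  [/\ (forall g, G g -> \det g = 1), G 1%:M,
      (forall g h, G g -> G h -> G (g *m h)),
      (forall g, G g -> G (invmx g)) & (forall g, G g -> G (- g))].

(* discreteness: every element of Gamma is isolated in PSL_2(R)
   (topology of PSL_2(R) = quotient of the matrix-entry topology of SL_2(R)) *)
Definition psl_discrete (G : Mat -> Prop) : Prop :=
  forall g, G g -> exists2 e : R, 0 < e &
    forall h, G h -> (forall i j, `|h i j - g i j| < e) -> h = g.

(* points of the upper half plane (Hp x y = x + i y, with 0 < y) and of the
   boundary P^1(R) = R u {oo} *)
Inductive pt := Hp of R & R | Bd of R | Inf.

Definition act (g : Mat) (p : pt) : pt :=
  let a := ea g in let b := eb g in let c := ec g in let d := ed g in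
  match p with
  | Hp x y =>
      let den := (c * x + d) ^+ 2 + (c * y) ^+ 2 in
      Hp ((a * c * (x ^+ 2 + y ^+ 2) + (a * d + b * c) * x + b * d) / den)
         ((a * d - b * c) * y / den)
  | Bd x => if c * x + d == 0 then Inf else Bd ((a * x + b) / (c * x + d))
  | Inf => if c == 0 then Inf else Bd (a / c)
  end.

Definition parabolic (g : Mat) : Prop :=
  ~ pequiv g 1%:M /\ `|\tr g| = 2.

Definition cusp (G : Mat -> Prop) (p : pt) : Prop :=
  match p with
  | Hp _ _ => False
  | _ => exists2 g, G g & parabolic g /\ act g p = p
  end.

Definition in_hstar (G : Mat -> Prop) (p : pt) : Prop :=
  match p with
  | Hp _ y => 0 < y
  | _ => cusp G p
  end.

(* U contains a basic neighbourhood of p in h^star (Shimura's topology):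
   euclidean discs for points of h, {s} u (open horodisc tangent at s) for a
   cusp s in R, and {oo} u {Im z > r} for the cusp oo *)
Definition hnbhd (p : pt) (U : pt -> Prop) : Prop :=
  match p with
  | Hp x y => exists2 r : R, 0 < r & forall x' y', 0 < y' ->
        (x' - x) ^+ 2 + (y' - y) ^+ 2 < r ^+ 2 -> U (Hp x' y')
  | Bd s => exists2 r : R, 0 < r & U (Bd s) /\ forall x' y', 0 < y' ->
        (x' - s) ^+ 2 + (y' - r) ^+ 2 < r ^+ 2 -> U (Hp x' y')
  | Inf => exists r : R, U Inf /\ forall x' y', r < y' -> U (Hp x' y')
  end.

Definition hstar_open (G : Mat -> Prop) (U : pt -> Prop) : Prop :=
  (forall p, U p -> in_hstar G p) /\ (forall p, U p -> hnbhd p U).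

(* h^star/Gamma is compact (quotient topology: open sets of h^star/Gamma are the
   images of the Gamma-invariant open subsets of h^star) *)
Definition hstar_quotient_compact (G : Mat -> Prop) : Prop :=
  forall (I : Type) (U : I -> pt -> Prop),
    (forall i, hstar_open G (U i)) ->
    (forall i g p, G g -> in_hstar G p -> (U i p <-> U i (act g p))) ->
    (forall p, in_hstar G p -> exists i, U i p) ->
    exists (n : nat) (f : 'I_n -> I), forall p, in_hstar G p ->
      exists k, U (f k) p.

(* complex conjugation: an anti-holomorphic involution of h; such maps are
   z |-> (a conj(z) + b)/(c conj(z) + d) with det [[a b][c d]] = -1, and being an
   involution means C^2 acts trivially, i.e. C^2 is scalar *)
Definition complex_conjugation (C : Mat) : Prop :=
  \det C = -1 /\ exists l : R, C *m C = l%:M.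

Definition cconj (C g : Mat) : Mat := C *m g *m C.

Definition real_fuchsian (G : Mat -> Prop) (C : Mat) : Prop :=
  [/\ psl_subgroup G, psl_discrete G, complex_conjugation C,
      (forall g, G g <-> G (cconj C g)) & hstar_quotient_compact G].

Definition admissible (G : Mat -> Prop) (C gamma : Mat) : Prop :=
  G gamma /\ pequiv (cconj C gamma) (invmx gamma).

(* preimage in SL_2(R) of the twisted centralizer Z_gamma *)
Definition twisted_centralizer (G : Mat -> Prop) (C gamma : Mat) (s : Mat) : Prop :=
  G s /\ pequiv (cconj C s *m gamma *m invmx s) gamma.

(* the subgroup Z (given by its preimage in SL_2(R)) of PSL_2(R) is isomorphic
   to the group (T, mul) *)
Definition psl_iso (T : Type) (mul : T -> T -> T) (Z : Mat -> Prop) : Prop :=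
  exists phi : T -> Mat,
    [/\ (forall t, Z (phi t)),
        (forall s t, pequiv (phi (mul s t)) (phi s *m phi t)),
        (forall s t, pequiv (phi s) (phi t) -> s = t) &
        (forall z, Z z -> exists t, pequiv (phi t) z)].

End Fuchsian.

Definition triv_mul (_ _ : unit) : unit := tt.
Definition z2_mul (a b : bool) : bool := addb a b.
Definition zz_mul (m n : int) : int := (m + n)%R.
(* Z/2Z |x Z : pairs (a, m), (a, m)(b, n) = (a + b, m + (-1)^a n) *)
Definition dinf_mul (x y : bool * int) : bool * int :=
  (addb x.1 y.1, (x.2 + (if x.1 then - y.2 else y.2))%R).

(* Because gamma^c = +-gamma^-1, the matrix M = C gamma again defines a complex
   conjugation, and s lies in Z_gamma exactly when s commutes with M up to sign.
   Conjugating M to the reflection diag(1, -1), Z_gamma becomes the set of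
   diagonal matrices diag(a, a^-1) and antidiagonal matrices [[0, b], [-b^-1, 0]]
   of the conjugated group. By discreteness the entries a that occur form a
   discrete subgroup of R^x, hence {+-1} or {+-t^m | m in Z}, and the
   antidiagonal elements, if any, form a single coset of the diagonal ones. The
   four combinations give the four groups. *)

From HB Require Import structures.
From mathcomp Require Import all_boot all_order all_algebra.
From mathcomp Require Import boolp classical_sets reals.
From mathcomp Require Import ring lra.
Set Implicit Arguments. Unset Strict Implicit. Unset Printing Implicit Defensive.
Import Order.TTheory GRing.Theory Num.Theory.
Local Open Scope ring_scope.

Lemma ord2P (i : 'I_2) : i = ord0 \/ i = ord_max.
Proof. by case: i => [[|[|//]] Hi]; [left|right]; apply: val_inj. Qed.

Section Matrix2.
Variable R : realType.
Notation Mat := 'M[R]_2.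
Implicit Types (A : Mat) (a b c d l : R).

Definition mx2 a b c d : Mat :=
  \matrix_(i, j) if i == ord0 then (if j == ord0 then a else b)
                 else (if j == ord0 then c else d).

Lemma mx2K A : mx2 (ea A) (eb A) (ec A) (ed A) = A.
Proof.
apply/matrixP => i j; rewrite mxE /ea /eb /ec /ed.
by case: (ord2P i) => ->; case: (ord2P j) => ->.
Qed.

Lemma mx2_inj a b c d a' b' c' d' :
  mx2 a b c d = mx2 a' b' c' d' -> [/\ a = a', b = b', c = c' & d = d'].
Proof.
move=> e; have entry i j := congr1 (fun M : Mat => M i j) e.
by move: (entry ord0 ord0) (entry ord0 ord_max) (entry ord_max ord0)
  (entry ord_max ord_max); rewrite !mxE.
Qed.

Lemma mulmx2 a b c d a' b' c' d' :
  mx2 a b c d *m mx2 a' b' c' d' =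
  mx2 (a * a' + b * c') (a * b' + b * d') (c * a' + d * c') (c * b' + d * d').
Proof.
apply/matrixP => i j; rewrite !mxE !big_ord_recl big_ord0 addr0 !mxE.
by case: (ord2P i) => ->; case: (ord2P j) => ->.
Qed.

Lemma oppmx2 a b c d : - mx2 a b c d = mx2 (- a) (- b) (- c) (- d).
Proof.
by apply/matrixP => i j; rewrite !mxE; case: (ord2P i) => ->; case: (ord2P j) => ->.
Qed.

Lemma scalar_mx2 l : l%:M = mx2 l 0 0 l.
Proof.
by apply/matrixP => i j; rewrite !mxE; case: (ord2P i) => ->; case: (ord2P j) => ->.
Qed.

Lemma det_mx2 a b c d : \det (mx2 a b c d) = a * d - b * c.
Proof.
rewrite (expand_det_row _ ord0) !big_ord_recl big_ord0 addr0 /cofactor !det_mx11.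
by rewrite !mxE /= expr0 expr1 mul1r mulN1r mulrN.
Qed.

Lemma pequiv_sym A B : pequiv A B -> pequiv B A.
Proof. by case=> ->; [left | right; rewrite opprK]. Qed.

End Matrix2.

Section ComplexConjugation.
Variable R : realType.
Notation Mat := 'M[R]_2.

Lemma complex_conjugation_mx2 (X : Mat) : complex_conjugation X ->
  exists a b c : R, X = mx2 a b c (- a) /\ a ^+ 2 + b * c = 1.
Proof.
rewrite -(mx2K X) /complex_conjugation det_mx2 mulmx2 => -[hdet [l /eqP]].
rewrite scalar_mx2 => /eqP /mx2_inj [h1 h2 h3 h4].
move: (ea X) (eb X) (ec X) (ed X) hdet h1 h2 h3 h4 => a b c d hdet h1 h2 h3 h4.
have trace0 : a + d = 0.
  (* Otherwise b = c = 0 and a = d, so X would be scalar, against det X = -1. *)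
  apply/eqP/negP => /negP tr_neq0.
  have [b0 c0] : b = 0 /\ c = 0.
    by split; apply: (mulIf tr_neq0); rewrite mul0r; nra.
  subst b c; have : (a - d) * (a + d) = 0 by nra.
  by move/eqP; rewrite mulf_eq0 (negbTE tr_neq0) orbF subr_eq0 => /eqP ad; nra.
have -> : d = - a by lra.
by exists a, b, c; split => //; nra.
Qed.

Lemma complex_conjugation_sqr (X : Mat) : complex_conjugation X -> X *m X = 1%:M.
Proof.
move/complex_conjugation_mx2 => [a [b [c [-> h]]]].
by rewrite mulmx2 scalar_mx2; congr mx2; rewrite ?oppr0; nra.
Qed.

Definition reflmx : Mat := mx2 1 0 0 (-1).

Lemma complex_conjugation_similar (X : Mat) : complex_conjugation X ->
  exists2 P : Mat, P \in unitmx & X *m P = P *m reflmx.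
Proof.
move/complex_conjugation_mx2 => [a [b [c [-> h]]]].
(* The columns of P are eigenvectors of X for the eigenvalues 1 and -1. *)
have unit_of_det (P : Mat) : \det P != 0 -> P \in unitmx by rewrite unitmxE unitfE.
have [b0|b_neq0] := eqVneq b 0.
  have : (a - 1) * (a + 1) = 0 by rewrite b0 mul0r addr0 in h; lra.
  rewrite b0; move/eqP; rewrite mulf_eq0 => /orP[] /eqP a_pm1.
    have -> : a = 1 by lra.
    exists (mx2 1 0 (c / 2) 1); first by apply: unit_of_det; rewrite det_mx2; lra.
    by rewrite /reflmx !mulmx2; congr mx2; field.
  have -> : a = -1 by lra.
  exists (mx2 0 2 (-1/2) (- c)); first by apply: unit_of_det; rewrite det_mx2; lra.
  by rewrite /reflmx !mulmx2; congr mx2; field.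
have c_def : c = (1 - a ^+ 2) / b by apply: (mulIf b_neq0); rewrite mulfVK // -h; ring.
exists (mx2 (-1/2) b (- (1 - a) / (2 * b)) (-1 - a)).
  by apply: unit_of_det; rewrite det_mx2 (_ : _ - _ = 1) ?oner_neq0 //; field.
by rewrite /reflmx !mulmx2 c_def; congr mx2; field.
Qed.

End ComplexConjugation.

Arguments reflmx {R}.

Lemma invmx_eq (R : comUnitRingType) n (A B : 'M[R]_n) : A *m B = 1%:M -> invmx A = B.
Proof.
by move=> AB; have [uA _] := mulmx1_unit AB; rewrite -[RHS](mulKmx uA) AB mulmx1.
Qed.

Section ConjugateByUnit.
Variables (F : fieldType) (n : nat) (P : 'M[F]_n).
Hypothesis uP : P \in unitmx.
Implicit Types X Y : 'M[F]_n.

Lemma conjmx_mul X Y : conjmx P (X *m Y) = conjmx P X *m conjmx P Y.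
Proof. by rewrite conjmxM // inE stablemx_unit. Qed.

Lemma conjmx1 : conjmx P 1%:M = 1%:M.
Proof. by rewrite conjmx_scalar // row_free_unit. Qed.

Lemma conjmxN X : conjmx P (- X) = - conjmx P X.
Proof. by rewrite !conjumx // mulmxN mulNmx. Qed.

Lemma conjmx_inv X : X \in unitmx -> conjmx P (invmx X) = invmx (conjmx P X).
Proof.
by move=> uX; apply/esym/invmx_eq; rewrite -conjmx_mul mulmxV // conjmx1.
Qed.

Lemma det_conjmx X : \det (conjmx P X) = \det X.
Proof.
rewrite conjumx // !det_mulmx det_inv mulrAC divff ?mul1r //.
by rewrite -unitfE -unitmxE.
Qed.

Lemma conjmx_inj : injective (conjmx P).
Proof. by move=> X Y /(congr1 (conjmx (invmx P))); rewrite !conjmxK. Qed.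

End ConjugateByUnit.

Section EntryBounds.
Variables (R : realFieldType) (n : nat).
Implicit Types A B X : 'M[R]_n.

Lemma mulmx_entry_le A B (a b : R) :
  (forall i j, `|A i j| <= a) -> (forall i j, `|B i j| <= b) ->
  forall i j, `|(A *m B) i j| <= n%:R * (a * b).
Proof.
move=> hA hB i j; rewrite mxE; apply: le_trans (ler_norm_sum _ _ _) _.
rewrite mulr_natl -[n in _ *+ n]card_ord -sumr_const; apply: ler_sum => k _.
by rewrite normrM ler_pM.
Qed.

Lemma entries_bounded A : exists2 K : R, 0 < K & forall i j, `|A i j| <= K.
Proof.
exists (\big[Num.max/1]_(ij : 'I_n * 'I_n) `|A ij.1 ij.2|).
  exact: lt_le_trans ltr01 (bigmax_ge_id _ _ _ _).
by move=> i j; apply: (le_bigmax _ (fun ij : 'I_n * 'I_n => `|A ij.1 ij.2|) (i, j)).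
Qed.

Lemma mulmx_entries_small A B (e0 : R) : 0 < e0 ->
  exists2 e : R, 0 < e & forall X, (forall i j, `|X i j| < e) ->
    forall i j, `|(A *m X *m B) i j| < e0.
Proof.
move=> e0_gt0; have [a a_gt0 hA] := entries_bounded A.
have [b b_gt0 hB] := entries_bounded B.
pose k := n%:R * (n%:R * a * b).
have k_ge0 : 0 <= k by rewrite !mulr_ge0 // ltW.
exists (e0 / (k + 1)) => [|X hX i j]; first by rewrite divr_gt0 // ltr_wpDl.
have hAX := mulmx_entry_le hA (fun i j => ltW (hX i j)).
apply: le_lt_trans (mulmx_entry_le hAX hB i j) _.
have -> : n%:R * (n%:R * (a * (e0 / (k + 1))) * b) = k / (k + 1) * e0.
  by rewrite /k; field; rewrite -/k; lra.
by rewrite gtr_pMl // ltr_pdivrMr ?mul1r ?ltrDl //; lra.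
Qed.

End EntryBounds.

Section ConjugateSubgroup.
Variables (R : realType) (P : 'M[R]_2).
Hypothesis uP : P \in unitmx.
Notation Mat := 'M[R]_2.
Implicit Types (G Z : Mat -> Prop) (X Y : Mat).

Lemma pequiv_conjmx X Y : pequiv (conjmx P X) (conjmx P Y) <-> pequiv X Y.
Proof.
split=> -[e|e]; [left|right|left|right]; rewrite ?e ?conjmxN //.
- exact: conjmx_inj e.
- by apply: (conjmx_inj uP); rewrite e conjmxN.
Qed.

Lemma psl_subgroup_conjmx G : psl_subgroup G -> psl_subgroup (fun X => G (conjmx P X)).
Proof.
case=> Gdet G1 GM GV GN; split=> [X|||X|X].
- by move/Gdet; rewrite det_conjmx.
- by rewrite conjmx1.
- by move=> X Y GX GY; rewrite conjmx_mul //; apply: GM.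
- move=> GX; have uX : X \in unitmx.
    by rewrite unitmxE -(det_conjmx uP) (Gdet _ GX) unitr1.
  by rewrite conjmx_inv //; apply: GV.
- by rewrite conjmxN //; apply: GN.
Qed.

Lemma psl_discrete_conjmx G : psl_discrete G -> psl_discrete (fun X => G (conjmx P X)).
Proof.
move=> Gdisc g Gg; have [e0 e0_gt0 g_isolated] := Gdisc _ Gg.
have [e e_gt0 small] := mulmx_entries_small P (invmx P) e0_gt0.
exists e => // h Gh near_hg; apply: (conjmx_inj uP); apply: g_isolated => // i j.
have hg_small k l : `|(h - g) k l| < e by rewrite !mxE; apply: near_hg.
have := small _ hg_small i j.
by rewrite mulmxBr mulmxBl -!conjumx // !mxE.
Qed.

Lemma psl_iso_conjmx T (mul : T -> T -> T) Z Z' :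
  (forall X, Z (conjmx P X) <-> Z' X) -> psl_iso mul Z' -> psl_iso mul Z.
Proof.
move=> ZE [phi [Zphi phiM phi_inj phi_onto]].
exists (fun t => conjmx P (phi t)); split.
- by move=> t; apply/ZE.
- by move=> s t; rewrite -conjmx_mul // pequiv_conjmx.
- by move=> s t /pequiv_conjmx; apply: phi_inj.
move=> z Zz; have [|t] := phi_onto (conjmx (invmx P) z).
  by apply/ZE; rewrite conjmxVK.
by rewrite -pequiv_conjmx conjmxVK //; exists t.
Qed.

End ConjugateSubgroup.

Section TwistedCentralizer.
Variable R : realType.
Notation Mat := 'M[R]_2.
Implicit Types (G : Mat -> Prop) (C M N P gamma s X : Mat).

Definition pcentralizer G M s : Prop := G s /\ pequiv (s *m M) (M *m s).

Lemma admissible_complex_conjugation G C gamma : psl_subgroup G ->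
  complex_conjugation C -> admissible G C gamma -> complex_conjugation (C *m gamma).
Proof.
move=> [Gdet _ _ _ _] [Cdet _] [Gg gammaC]; have gamma_det := Gdet _ Gg.
split; first by rewrite det_mulmx Cdet gamma_det mulr1.
have ugamma : gamma \in unitmx by rewrite unitmxE gamma_det unitr1.
rewrite (_ : _ *m _ = cconj C gamma *m gamma); last by rewrite /cconj !mulmxA.
by case: gammaC => ->; [exists 1 | exists (-1)]; rewrite ?mulNmx mulVmx // ?raddfN.
Qed.

Lemma cconj_twistE C gamma s X : C *m C = 1%:M -> s \in unitmx ->
  cconj C s *m gamma *m invmx s = X <-> s *m (C *m gamma) = C *m X *m s.
Proof.
move=> CC us; rewrite /cconj; split=> [<-|e].
  by rewrite !mulmxA mulmxKV // CC mul1mx.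
have -> : C *m s *m C *m gamma = C *m (s *m (C *m gamma)) by rewrite !mulmxA.
by rewrite e !mulmxA CC mul1mx mulmxK.
Qed.

Lemma twisted_centralizerE G C gamma s : psl_subgroup G -> C *m C = 1%:M ->
  twisted_centralizer G C gamma s <-> pcentralizer G (C *m gamma) s.
Proof.
move=> [Gdet _ _ _ _] CC; split=> -[Gs e]; split=> //;
  have us : s \in unitmx by rewrite unitmxE (Gdet _ Gs) unitr1.
  case: e => /(cconj_twistE _ _ CC us) ->; [left | right]; by rewrite ?mulmxN ?mulNmx.
case: e => e; [left | right]; apply/(cconj_twistE _ _ CC us);
  by rewrite e ?mulmxN ?mulNmx.
Qed.

Lemma pcentralizer_conjmx G M N P t : P \in unitmx -> M *m P = P *m N ->
  pcentralizer G M (conjmx P t) <-> pcentralizer (fun X => G (conjmx P X)) N t.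
Proof.
move=> uP MP; have -> : M = conjmx P N by rewrite conjumx // -MP mulmxK.
by rewrite /pcentralizer -!conjmx_mul // pequiv_conjmx.
Qed.

End TwistedCentralizer.

Lemma bernoulli_ineq (R : realFieldType) (t : R) n :
  1 <= t -> 1 + n%:R * (t - 1) <= t ^+ n.
Proof.
move=> t_ge1; elim: n => [|n IHn]; first by rewrite mul0r addr0 expr0.
have tn_ge1 : 1 <= t ^+ n by rewrite exprn_ege1.
by rewrite exprS -natr1; nra.
Qed.

Section DiscreteMulGroup.
Variables (R : realType) (A : R -> Prop).
Hypothesis A1 : A 1.
Hypothesis AM : forall a b, A a -> A b -> A (a * b).
Hypothesis AV : forall a, A a -> A a^-1.
Hypothesis AN : forall a, A a -> A (- a).
Hypothesis A_neq0 : forall a, A a -> a != 0.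
Hypothesis A_discrete : exists2 d : R, 0 < d & forall a, A a -> `|a - 1| < d -> a = 1.

Lemma mulgroup_norm a : A a -> A `|a|.
Proof. by move=> Aa; case: (ler0P a) => _; [apply: AN|]. Qed.

Lemma mulgroup_div a b : A a -> A b -> A (a / b).
Proof. by move=> Aa Ab; apply/AM/AV. Qed.

Lemma mulgroup_expz t (m : int) : A t -> A (t ^ m).
Proof.
have expn n : A t -> A (t ^+ n).
  by move=> At; elim: n => [|n IHn]; rewrite ?expr0 // exprS; apply: AM.
by move=> At; case: m => n; [apply: expn | rewrite NegzE -invr_expz; apply/AV/expn].
Qed.

Lemma mulgroup_min_gt1 : (exists a, A a /\ 1 < a) ->
  exists t, [/\ A t, 1 < t & forall a, A a -> 1 < a -> t <= a].
Proof.
(* A point t of S within d of inf S is its minimum: for a smaller a in S,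
   t / a would lie in (1, 1 + d). *)
case=> a0 [Aa0 a0_gt1]; have [d d_gt0 isolated1] := A_discrete.
pose S : set R := fun x => A x /\ 1 < x.
have S_inf : has_inf S by split; [exists a0 | exists 1 => x [_ /ltW]].
have [t [At t_gt1] t_near_inf] := inf_adherent d_gt0 S_inf.
exists t; split=> // a Aa a_gt1; rewrite leNgt; apply/negP => a_lt_t.
have inf_le_a : inf S <= a by apply: ge_inf; [exists 1 => x [_ /ltW] | split].
have ta_gt1 : 1 < t / a by rewrite ltr_pdivlMr ?mul1r //; lra.
suff : t / a = 1 by move=> ta1; rewrite ta1 ltxx in ta_gt1.
apply: isolated1; first exact: mulgroup_div.
rewrite gtr0_norm ?subr_gt0 // (_ : t / a - 1 = (t - a) / a); last by field; lra.
by rewrite ltr_pdivrMr; nra.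
Qed.

Section Generator.
Variable t : R.
Hypotheses (At : A t) (t_gt1 : 1 < t) (t_min : forall a, A a -> 1 < a -> t <= a).

Lemma mulgroup_expn_lt n b : A b -> 1 <= b < t ^+ n -> exists k : nat, b = t ^+ k.
Proof.
elim: n b => [|n IHn] b Ab /andP[b_ge1].
  by rewrite expr0 => /(le_lt_trans b_ge1); rewrite ltxx.
move=> b_lt; have [b_lt_t|t_le_b] := ltP b t.
  exists 0%N; rewrite expr0; apply/eqP; rewrite eq_le b_ge1 andbT leNgt.
  by apply/negP => /(t_min Ab); rewrite leNgt b_lt_t.
have t_gt0 : 0 < t := lt_trans ltr01 t_gt1.
have [|k bt_eq] := IHn (b / t) (mulgroup_div Ab At).
  by rewrite ler_pdivlMr // ltr_pdivrMr // mul1r -exprSr t_le_b.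
by exists k.+1; rewrite exprSr -bt_eq divfK // gt_eqF.
Qed.

Lemma mulgroup_gen_pos b : A b -> 0 < b -> exists m : int, b = t ^ m.
Proof.
have exists_expn c : A c -> 1 <= c -> exists k : nat, c = t ^+ k.
  move=> Ac c_ge1; have t1_gt0 : 0 < t - 1 by rewrite subr_gt0.
  pose n := Num.bound (c / (t - 1)).
  have c_lt : c < n%:R * (t - 1).
    rewrite -ltr_pdivrMr // archi_boundP // divr_ge0 // ltW //.
    exact: lt_le_trans ltr01 c_ge1.
  have bern := bernoulli_ineq n (ltW t_gt1).
  by apply: (mulgroup_expn_lt (n := n)) => //; rewrite c_ge1 /=; lra.
move=> Ab b_gt0; have [b_ge1|b_lt1] := lerP 1 b.
  by have [k ->] := exists_expn _ Ab b_ge1; exists k.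
have [k bk] : exists k : nat, b^-1 = t ^+ k.
  by apply: exists_expn; [apply: AV | rewrite ltW // invf_gt1].
by exists (- k%:Z); rewrite -invr_expz (_ : t ^ k%:Z = t ^+ k) // -bk invrK.
Qed.

End Generator.

Lemma discrete_mulgroup_cases : (forall a, A a -> `|a| = 1) \/
  exists t, [/\ 1 < t, A t & forall a, A a -> exists m : int, `|a| = t ^ m].
Proof.
have [[t [At t_gt1 t_min]]|no_gt1] :=
  pselect (exists t, [/\ A t, 1 < t & forall a, A a -> 1 < a -> t <= a]).
  right; exists t; split=> // a Aa; apply: (mulgroup_gen_pos At t_gt1 t_min).
    exact: mulgroup_norm.
  by rewrite normr_gt0 A_neq0.
left=> a Aa; have Aa' := mulgroup_norm Aa.
have gt1_absurd x : A x -> 1 < x -> False.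
  by move=> Ax x_gt1; apply/no_gt1/mulgroup_min_gt1; exists x.
have [a_lt1|a_gt1|//] := ltrgtP `|a| 1.
  by case: (gt1_absurd _ (AV Aa')); rewrite invf_gt1 // normr_gt0 A_neq0.
by case: (gt1_absurd _ Aa' a_gt1).
Qed.

End DiscreteMulGroup.

Section DiagonalAntidiagonal.
Variable R : realType.
Notation Mat := 'M[R]_2.
Implicit Types a b c : R.

Definition diag2 a : Mat := mx2 a 0 0 a^-1.
Definition adiag2 b : Mat := mx2 0 b (- b^-1) 0.

Lemma diag2M a b : diag2 a *m diag2 b = diag2 (a * b).
Proof. by rewrite /diag2 mulmx2 invfM; congr mx2; ring. Qed.

Lemma diag2_adiag2 a b : diag2 a *m adiag2 b = adiag2 (a * b).
Proof. by rewrite /diag2 /adiag2 mulmx2 invfM; congr mx2; ring. Qed.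

Lemma adiag2_diag2 b a : adiag2 b *m diag2 a = adiag2 (b / a).
Proof. by rewrite /diag2 /adiag2 mulmx2 invf_div; congr mx2; ring. Qed.

Lemma adiag2M b c : adiag2 b *m adiag2 c = diag2 (- (b / c)).
Proof. by rewrite /diag2 /adiag2 mulmx2 invrN invf_div; congr mx2; ring. Qed.

Lemma diag2_1 : diag2 1 = 1%:M.
Proof. by rewrite scalar_mx2 /diag2 invr1. Qed.

Lemma diag2N a : diag2 (- a) = - diag2 a.
Proof. by rewrite /diag2 oppmx2 invrN oppr0. Qed.

Lemma adiag2N b : adiag2 (- b) = - adiag2 b.
Proof. by rewrite /adiag2 oppmx2 invrN oppr0. Qed.

Lemma det_diag2 a : \det (diag2 a) = 1 -> a != 0.
Proof.
rewrite /diag2 det_mx2; apply: contra_eqN => /eqP ->.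
by rewrite !mul0r subr0 eq_sym oner_eq0.
Qed.

Lemma det_adiag2 b : \det (adiag2 b) = 1 -> b != 0.
Proof.
rewrite /adiag2 det_mx2; apply: contra_eqN => /eqP ->.
by rewrite !mul0r subr0 eq_sym oner_eq0.
Qed.

Lemma invmx_diag2 a : a != 0 -> invmx (diag2 a) = diag2 a^-1.
Proof. by move=> a_neq0; apply: invmx_eq; rewrite diag2M mulfV // diag2_1. Qed.

Lemma invmx_adiag2 b : b != 0 -> invmx (adiag2 b) = adiag2 (- b).
Proof.
by move=> b_neq0; apply: invmx_eq; rewrite adiag2M invrN mulrN opprK mulfV // diag2_1.
Qed.

Lemma pequiv_diag2 a b : `|a| = `|b| -> pequiv (diag2 a) (diag2 b).
Proof.
by move/eqP; rewrite eqr_norm2 => /orP[] /eqP ->; [left | right; rewrite diag2N].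
Qed.

Lemma pequiv_adiag2 a b : `|a| = `|b| -> pequiv (adiag2 a) (adiag2 b).
Proof.
by move/eqP; rewrite eqr_norm2 => /orP[] /eqP ->; [left | right; rewrite adiag2N].
Qed.

Lemma pequiv_diag2_norm a b : pequiv (diag2 a) (diag2 b) -> `|a| = `|b|.
Proof. by rewrite /pequiv /diag2 oppmx2 => -[] /mx2_inj [-> _ _ _]; rewrite ?normrN. Qed.

Lemma pequiv_adiag2_norm a b : pequiv (adiag2 a) (adiag2 b) -> `|a| = `|b|.
Proof. by rewrite /pequiv /adiag2 oppmx2 => -[] /mx2_inj [_ -> _ _]; rewrite ?normrN. Qed.

Lemma diag2_adiag2_npequiv a b : a != 0 -> ~ pequiv (diag2 a) (adiag2 b).
Proof.
move=> a_neq0; rewrite /pequiv /diag2 /adiag2 !oppmx2 oppr0.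
by case=> /mx2_inj [a0 _ _ _]; move: a_neq0; rewrite a0 eqxx.
Qed.

End DiagonalAntidiagonal.

Lemma diag2_near1 (R : realType) (e : R) : 0 < e -> exists2 d : R, 0 < d &
  forall a, `|a - 1| < d -> forall i j, `|diag2 a i j - (1%:M : 'M[R]_2) i j| < e.
Proof.
move=> e_gt0; exists (Num.min (1 / 2) (e / 2)).
  by rewrite lt_min; apply/andP; split; lra.
move=> a; rewrite lt_min ltr_norml ltr_norml => /andP[/andP[a_lo a_hi] /andP[a_lo' a_hi']].
have a_gt0 : 0 < a by lra.
have inv_near : `|a^-1 - 1| < e.
  rewrite (_ : a^-1 - 1 = (1 - a) / a); last by field; lra.
  by rewrite normf_div (gtr0_norm a_gt0) ltr_pdivrMr // ltr_norml; apply/andP; split; nra.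
move=> i j; rewrite scalar_mx2 /diag2 !mxE.
case: (ord2P i) => ->; case: (ord2P j) => -> //=; rewrite ?subrr ?normr0 //.
by rewrite ltr_norml; apply/andP; split; lra.
Qed.

Lemma expz_norm_inj (R : realFieldType) (t : R) (m n : int) :
  1 < t -> `|t ^ m| = `|t ^ n| -> m = n.
Proof.
move=> t_gt1; have t_gt0 : 0 < t := lt_trans ltr01 t_gt1.
by rewrite !gtr0_norm ?exprz_gt0 //; apply: ieexprIz; rewrite // gt_eqF.
Qed.

Section PcentralizerReflection.
Variables (R : realType) (G : 'M[R]_2 -> Prop).
Hypotheses (Gsub : psl_subgroup G) (Gdisc : psl_discrete G).
Implicit Types a b t : R.
Let Z := pcentralizer G reflmx.

Lemma pcentralizer_reflmx_diag_or_adiag s : Z s ->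
  (exists a, s = diag2 a /\ G (diag2 a)) \/ (exists b, s = adiag2 b /\ G (adiag2 b)).
Proof.
case: Gsub => Gdet _ _ _ _ [Gs commute].
suff : (exists a, s = diag2 a) \/ (exists b, s = adiag2 b).
  by case=> -[x s_eq]; [left | right]; exists x; rewrite -s_eq.
have := Gdet _ Gs.
rewrite -(mx2K s) /pequiv /reflmx !mulmx2 oppmx2 det_mx2 in commute *.
move: (ea s) (eb s) (ec s) (ed s) commute => a b c d + s_det.
case=> /mx2_inj [e1 e2 e3 e4]; [left; exists a | right; exists b].
- have [b0 c0] : b = 0 /\ c = 0 by split; lra.
  subst b c.
  move: s_det; rewrite mul0r subr0 => ad1.
  have a_neq0 : a != 0 by rewrite -unitfE; apply/unitrPr; exists d.
  by rewrite /diag2 -[d](mulKf a_neq0) ad1 mulr1.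
- have [a0 d0] : a = 0 /\ d = 0 by split; lra.
  subst a d.
  move: s_det; rewrite mul0r sub0r => /(canRL (@opprK _)) bc.
  have b_neq0 : b != 0.
    by rewrite -unitfE; apply/unitrPr; exists (- c); rewrite mulrN bc opprK.
  by rewrite /adiag2 -[c](mulKf b_neq0) bc mulrN1.
Qed.

Lemma pcentralizer_diag2 a : G (diag2 a) -> Z (diag2 a).
Proof. by move=> Ga; split=> //; left; rewrite /reflmx /diag2 !mulmx2; congr mx2; ring. Qed.

Lemma pcentralizer_adiag2 b : G (adiag2 b) -> Z (adiag2 b).
Proof.
by move=> Gb; split=> //; right; rewrite /reflmx /adiag2 !mulmx2 oppmx2; congr mx2; ring.
Qed.

Lemma G_diag2_neq0 a : G (diag2 a) -> a != 0.
Proof. by case: Gsub => Gdet _ _ _ _ /Gdet /det_diag2. Qed.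

Lemma G_adiag2_neq0 b : G (adiag2 b) -> b != 0.
Proof. by case: Gsub => Gdet _ _ _ _ /Gdet /det_adiag2. Qed.

Lemma G_diag2_1 : G (diag2 1).
Proof. by case: Gsub; rewrite diag2_1. Qed.

Lemma G_diag2M a b : G (diag2 a) -> G (diag2 b) -> G (diag2 (a * b)).
Proof. by case: Gsub => _ _ GM _ _ Ga Gb; rewrite -diag2M; apply: GM. Qed.

Lemma G_diag2V a : G (diag2 a) -> G (diag2 a^-1).
Proof.
by move=> Ga; case: Gsub => _ _ _ GV _; rewrite -invmx_diag2 ?G_diag2_neq0 //; apply: GV.
Qed.

Lemma G_diag2N a : G (diag2 a) -> G (diag2 (- a)).
Proof. by case: Gsub => _ _ _ _ GN Ga; rewrite diag2N; apply: GN. Qed.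

Lemma G_diag2_adiag2 a b : G (diag2 a) -> G (adiag2 b) -> G (adiag2 (a * b)).
Proof. by case: Gsub => _ _ GM _ _ Ga Gb; rewrite -diag2_adiag2; apply: GM. Qed.

Lemma G_adiag2_div b c : G (adiag2 b) -> G (adiag2 c) -> G (diag2 (b / c)).
Proof.
case: Gsub => _ _ GM GV _ Gb Gc; have := GM _ _ Gb (GV _ Gc).
by rewrite invmx_adiag2 ?G_adiag2_neq0 // adiag2M invrN mulrN opprK.
Qed.

Lemma G_diag2_discrete :
  exists2 d : R, 0 < d & forall a, G (diag2 a) -> `|a - 1| < d -> a = 1.
Proof.
case: Gsub => _ G1 _ _ _; have [e e_gt0 isolated1] := Gdisc G1.
have [d d_gt0 near1] := diag2_near1 e_gt0; exists d => // a Ga /near1 a_near1.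
by have /(congr1 (@ea _)) := isolated1 _ Ga a_near1; rewrite /ea scalar_mx2 /diag2 !mxE.
Qed.

Lemma G_diag2_expz t (m : int) : G (diag2 t) -> G (diag2 (t ^ m)).
Proof. exact: mulgroup_expz G_diag2_1 G_diag2M G_diag2V t m. Qed.

Lemma G_diag2_cases : (forall a, G (diag2 a) -> `|a| = 1) \/
  exists t, [/\ 1 < t, G (diag2 t) & forall a, G (diag2 a) -> exists m : int, `|a| = t ^ m].
Proof.
exact: discrete_mulgroup_cases G_diag2M G_diag2V G_diag2N G_diag2_neq0 G_diag2_discrete.
Qed.

Lemma pcentralizer_iso_triv : (forall a, G (diag2 a) -> `|a| = 1) ->
  (forall b, ~ G (adiag2 b)) -> psl_iso triv_mul Z.
Proof.
move=> diag_triv no_adiag; exists (fun _ => 1%:M); split=> [_||[] []|z] //.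
- by rewrite -diag2_1; apply/pcentralizer_diag2/G_diag2_1.
- by left; rewrite mul1mx.
case/pcentralizer_reflmx_diag_or_adiag => [[a [-> Ga]] | [b [_ /no_adiag []]]].
by exists tt; rewrite -diag2_1; apply: pequiv_diag2; rewrite normr1 diag_triv.
Qed.

Lemma pcentralizer_iso_z2 b0 : (forall a, G (diag2 a) -> `|a| = 1) ->
  G (adiag2 b0) -> psl_iso z2_mul Z.
Proof.
move=> diag_triv Gb0; have b0_neq0 := G_adiag2_neq0 Gb0.
have one_adiag2 : ~ pequiv 1%:M (adiag2 b0).
  by rewrite -diag2_1; apply: diag2_adiag2_npequiv; apply: oner_neq0.
exists (fun x : bool => if x then adiag2 b0 else 1%:M); split.
- case; first exact: pcentralizer_adiag2.
  by rewrite -diag2_1; apply/pcentralizer_diag2/G_diag2_1.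
- case; case; rewrite /= ?mul1mx ?mulmx1; try by left.
  by rewrite adiag2M -diag2_1; apply: pequiv_diag2; rewrite normrN divff // normr1.
- by case; case => //= /pequiv_sym.
move=> z /pcentralizer_reflmx_diag_or_adiag [[a [-> Ga]] | [b [-> Gb]]].
  by exists false; rewrite -diag2_1; apply: pequiv_diag2; rewrite normr1 diag_triv.
exists true; apply: pequiv_adiag2; have := diag_triv _ (G_adiag2_div Gb Gb0).
by rewrite normf_div => /(canRL (divfK _)) ->; rewrite ?mul1r ?normr_eq0.
Qed.

Lemma pcentralizer_iso_zz t : 1 < t -> G (diag2 t) ->
  (forall a, G (diag2 a) -> exists m : int, `|a| = t ^ m) ->
  (forall b, ~ G (adiag2 b)) -> psl_iso zz_mul Z.
Proof.
move=> t_gt1 Gt diag_gen no_adiag; have t_gt0 : 0 < t := lt_trans ltr01 t_gt1.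
exists (fun m => diag2 (t ^ m)); split.
- by move=> m; apply/pcentralizer_diag2/G_diag2_expz.
- by move=> m n; left; rewrite diag2M exprzDr // unitfE gt_eqF.
- by move=> m n /pequiv_diag2_norm /(expz_norm_inj t_gt1).
move=> z /pcentralizer_reflmx_diag_or_adiag
  [[a [-> /diag_gen [m am]]] | [b [_ /no_adiag []]]].
by exists m; apply: pequiv_diag2; rewrite am gtr0_norm // exprz_gt0.
Qed.

Lemma pcentralizer_iso_dinf t b0 : 1 < t -> G (diag2 t) ->
  (forall a, G (diag2 a) -> exists m : int, `|a| = t ^ m) ->
  G (adiag2 b0) -> psl_iso dinf_mul Z.
Proof.
move=> t_gt1 Gt diag_gen Gb0; have b0_neq0 := G_adiag2_neq0 Gb0.
have t_gt0 : 0 < t := lt_trans ltr01 t_gt1.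
have t_unit : t \is a GRing.unit by rewrite unitfE gt_eqF.
have tm_neq0 (m : int) : t ^ m != 0 by rewrite gt_eqF // exprz_gt0.
exists (fun x : bool * int => if x.1 then adiag2 (t ^ x.2 * b0) else diag2 (t ^ x.2)).
split.
- case=> [[] m] /=; last exact/pcentralizer_diag2/G_diag2_expz.
  exact/pcentralizer_adiag2/G_diag2_adiag2/Gb0/G_diag2_expz.
- case=> [[] m] [[] n] /=; rewrite exprzDr // -?invr_expz.
  + right; rewrite adiag2M -diag2N opprK; congr diag2.
    by field; rewrite b0_neq0 tm_neq0.
  + by left; rewrite adiag2_diag2; congr adiag2; rewrite mulrAC.
  + by left; rewrite diag2_adiag2 mulrA.
  + by left; rewrite diag2M.
- case=> [[] m] [[] n] /= e.
  + have := pequiv_adiag2_norm e; rewrite !normrM => /(mulIf _) tmn.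
    by rewrite (expz_norm_inj t_gt1 (tmn _)) // normr_eq0.
  + by case: (diag2_adiag2_npequiv (tm_neq0 n) (pequiv_sym e)).
  + by case: (diag2_adiag2_npequiv (tm_neq0 m) e).
  + by rewrite (expz_norm_inj t_gt1 (pequiv_diag2_norm e)).
move=> z /pcentralizer_reflmx_diag_or_adiag [[a [-> /diag_gen [m am]]] | [b [-> Gb]]].
  by exists (false, m); apply: pequiv_diag2; rewrite am gtr0_norm // exprz_gt0.
have [m bm] := diag_gen _ (G_adiag2_div Gb Gb0).
exists (true, m); apply: pequiv_adiag2.
by rewrite normrM gtr0_norm ?exprz_gt0 // -bm normf_div divfK // normr_eq0.
Qed.

Lemma pcentralizer_reflmx_cases :
  [\/ psl_iso triv_mul Z, psl_iso z2_mul Z, psl_iso zz_mul Z | psl_iso dinf_mul Z].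
Proof.
have [[b0 Gb0]|no_adiag] := pselect (exists b, G (adiag2 b));
  case: G_diag2_cases => [diag_triv | [t [t_gt1 Gt diag_gen]]].
- exact/Or42/(pcentralizer_iso_z2 diag_triv Gb0).
- exact/Or44/(pcentralizer_iso_dinf t_gt1 Gt diag_gen Gb0).
- by apply/Or41/pcentralizer_iso_triv => // b Gb; apply: no_adiag; exists b.
- apply/Or43/(pcentralizer_iso_zz t_gt1 Gt diag_gen) => b Gb.
  by apply: no_adiag; exists b.
Qed.

End PcentralizerReflection.

Theorem lemma3p6 (R : realType) (G : 'M[R]_2 -> Prop) (C gamma : 'M[R]_2) :
  real_fuchsian G C -> admissible G C gamma ->
  let Z := twisted_centralizer G C gamma in
  [\/ psl_iso triv_mul Z, psl_iso z2_mul Z, psl_iso zz_mul Z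
    | psl_iso dinf_mul Z].
Proof.
move=> [Gsub Gdisc Cconj _ _] adm Z.
have CC := complex_conjugation_sqr Cconj.
have [P uP CgammaP] :=
  complex_conjugation_similar (admissible_complex_conjugation Gsub Cconj adm).
have ZE X : Z (conjmx P X) <-> pcentralizer (fun Y => G (conjmx P Y)) reflmx X.
  exact: iff_trans (twisted_centralizerE _ _ Gsub CC)
    (pcentralizer_conjmx _ _ uP CgammaP).
have := pcentralizer_reflmx_cases (psl_subgroup_conjmx uP Gsub)
  (psl_discrete_conjmx uP Gdisc).
by case=> iso; [apply: Or41 | apply: Or42 | apply: Or43 | apply: Or44];
  exact: (psl_iso_conjmx uP ZE iso).
Qed.
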